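(* Let $w=(i,\epsilon)\in\mathcal W_0(d)$ and $\tau=\tau(w)$. Then $d$ is even and: (1) $\mathrm{NF}(w)=(x_{j(1)},\dots,x_{j(d/2)},x_{j(d/2)}^{-1},\dots,x_{j(1)}^{-1})$ for some $j:[d/2]\to\mathbb N_0$ with $j(l)+p-1\ge j(l+1)$ for $1\le l\le d/2-1$, and $-d(p-1)/2\le j(l)-i(\tau^{-1}(l))\le d(p-1)/2$ for all $l\in[d/2]$; (2) for every $k\in[d/2]$, $|i(\tau^{-1}(k))-i(\tau^{-1}(d-k+1))|\le d(p-1)$.
   Context: Fix an integer $p\ge2$; $F_p=\langle x_0,x_1,\dots\mid x_nx_k=x_kx_{n+p-1}\ \forall k<n\rangle$ with identity $e$. For $d\in\mathbb N$ and $[d]=\{1,\dots,d\}$, a word of length $d$ is a tuple $w=(x_{i(1)}^{\epsilon(1)},\dots,x_{i(d)}^{\epsilon(d)})$ with $i:[d]\to\mathbb N_0$, $\epsilon:[d]\to\{1,-1\}$, written $w=(i,\epsilon)$; $\mathrm{eval}(w)=x_{i(1)}^{\epsilon(1)}\cdots x_{i(d)}^{\epsilon(d)}$; $\mathcal W(d)$ is the set of words of length $d$ and $\mathcal W_0(d)=\{w\in\mathcal W(d):\mathrm{eval}(w)=e\}$. Rewriting relations: ($\rightsquigarrow$) a consecutive pair $(x_a^{-1},x_b)$ is replaced by $(x_b,x_{a+p-1}^{-1})$ if $a>b$, by $(x_{b+p-1},x_a^{-1})$ if $a<b$, by $(x_b,x_a^{-1})$ if $a=b$; ($\rightarrowtail$,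 on $\rightsquigarrow$-irreducible words) $(x_a,x_b)$ with $b-p+1>a$ is replaced by $(x_{b-p+1},x_a)$, and $(x_a^{-1},x_b^{-1})$ with $a-p+1>b$ by $(x_b^{-1},x_{a-p+1}^{-1})$. The normal form $\mathrm{NF}(w)$ is obtained by applying $\rightsquigarrow$ until irreducible and then $\rightarrowtail$ until irreducible (well defined). Each step swaps two adjacent letters; $\tau(w)\in S_d$ is defined by letting $\tau(w)(l)$ be the position in $\mathrm{NF}(w)$ of the letter originating from the $l$-th letter of $w$. *)

From mathcomp Require Import all_boot all_order all_algebra.
Set Implicit Arguments. Unset Strict Implicit. Unset Printing Implicit Defensive.
Import Order.TTheory GRing.Theory Num.Theory.

Record group := Group {
  gcar :> Type;
  gmul : gcar -> gcar -> gcar;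
  ginv : gcar -> gcar;
  gone : gcar;
  gmulA : forall x y z, gmul x (gmul y z) = gmul (gmul x y) z;
  gmul1 : forall x, gmul gone x = x;
  gmulV : forall x, gmul (ginv x) x = gone
}.

(* A word is a list of letters (index, sign); sign true = exponent +1,
   false = exponent -1. *)
Definition gletter (G : group) (x : nat -> G) (a : nat * bool) : G :=
  if a.2 then x a.1 else ginv (x a.1).

Definition geval (G : group) (x : nat -> G) (w : seq (nat * bool)) : G :=
  foldr (fun a g => gmul (gletter x a) g) (gone G) w.

Definition Fp_rel (p : nat) (G : group) (x : nat -> G) : Prop :=
  forall k n, k < n -> gmul (x n) (x k) = gmul (x k) (x (n + p - 1)).

(* eval(w) = e in F_p = <x_0, x_1, ... | x_n x_k = x_k x_{n+p-1} (k<n)>: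
   by the universal property of the presented group, this holds iff the
   word evaluates to the identity in every group under every assignment
   of generators satisfying the defining relations. *)
Definition eval_trivial (p : nat) (w : seq (nat * bool)) : Prop :=
  forall (G : group) (x : nat -> G), Fp_rel p x -> geval x w = gone G.

Definition word (d : nat) (i : nat -> nat) (eps : nat -> bool) : seq (nat * bool) :=
  [seq (i l, eps l) | l <- iota 1 d].

Definition tletter := (nat * bool * nat)%type.

Definition tword (d : nat) (i : nat -> nat) (eps : nat -> bool) : seq tletter :=
  [seq (i l, eps l, l) | l <- iota 1 d].

Inductive rstep1 (p : nat) : seq tletter -> seq tletter -> Prop :=
| R1gt s1 s2 a b oa ob : a > b ->
    rstep1 p (s1 ++ (a, false, oa) :: (b, true, ob) :: s2)
             (s1 ++ (b, true, ob) :: (a + p - 1, false, oa) :: s2)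
| R1lt s1 s2 a b oa ob : a < b ->
    rstep1 p (s1 ++ (a, false, oa) :: (b, true, ob) :: s2)
             (s1 ++ (b + p - 1, true, ob) :: (a, false, oa) :: s2)
| R1eq s1 s2 a oa ob :
    rstep1 p (s1 ++ (a, false, oa) :: (a, true, ob) :: s2)
             (s1 ++ (a, true, ob) :: (a, false, oa) :: s2).

(* The relation >-> . Conditions b - p + 1 > a and a - p + 1 > b are
   written without truncated subtraction. *)
Inductive rstep2 (p : nat) : seq tletter -> seq tletter -> Prop :=
| R2pos s1 s2 a b oa ob : a + p - 1 < b ->
    rstep2 p (s1 ++ (a, true, oa) :: (b, true, ob) :: s2)
             (s1 ++ (b - p + 1, true, ob) :: (a, true, oa) :: s2)
| R2neg s1 s2 a b oa ob : b + p - 1 < a ->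
    rstep2 p (s1 ++ (a, false, oa) :: (b, false, ob) :: s2)
             (s1 ++ (b, false, ob) :: (a - p + 1, false, oa) :: s2).

Inductive star (T : Type) (R : T -> T -> Prop) : T -> T -> Prop :=
| star_refl x : star R x x
| star_step x y z : R x y -> star R y z -> star R x z.

Definition irreducible (T : Type) (R : T -> T -> Prop) (x : T) : Prop :=
  forall y, ~ R x y.

(* v is (a tracked version of) NF(w): obtained by applying ~> until
   irreducible, then >-> until irreducible. *)
Definition NF_run (p : nat) (w v : seq tletter) : Prop :=
  exists u, star (rstep1 p) w u /\ irreducible (rstep1 p) u /\
            star (rstep2 p) u v /\ irreducible (rstep2 p) v.

Definition untrack (v : seq tletter) : seq (nat * bool) := [seq t.1 | t <- v].

(* tau^{-1}(l), l in 1..d: the original position of the l-th letter of NF(w) *)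
Definition tauinv (v : seq tletter) (l : nat) : nat := (nth (0, true, 0) v l.-1).2.

(* Sending every generator to 1 in Z shows that w has as many positive as
   negative letters, so d = 2K.  Under ~> a positive letter only moves left
   across negative letters and a negative one only right across positive
   letters, each crossing raising its index by at most p - 1; so the
   ~>-irreducible word consists of K positive letters followed by K negative
   ones, each index lying in [i(o), i(o) + (p-1)K] with o the letter's origin.
   Under >-> indices only decrease, while the ceiling of a letter (its index
   once passed through the other letters of its sign) is invariant and
   exceeds the final index by at most (p-1)K.  Finally NF(w) = x_c x_c'^-1
   with c and rev c' both in normal form, and since NF(w) = e an action of F_p
   on nat * seq nat that tells positive normal forms apart forces c = rev c'. *)

From Pilot Require Import Defs.
From mathcomp Require Import all_boot all_order all_algebra.
From mathcomp Require Import zify.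
From Stdlib Require Import FunctionalExtensionality ProofIrrelevance.
Import Order.TTheory GRing.Theory Num.Theory.
Set Implicit Arguments. Unset Strict Implicit. Unset Printing Implicit Defensive.

(** * Evaluation and the rewriting steps *)

Section GroupTheory.
Variable G : group.
Implicit Types a b c e x y : G.

Lemma gmulgV x : gmul x (ginv x) = gone G.
Proof.
rewrite -[LHS]gmul1 -[in X in gmul X _](gmulV (ginv x)) -gmulA.
by rewrite [gmul (ginv x) (gmul x (ginv x))]gmulA gmulV gmul1 gmulV.
Qed.

Lemma gmulg1 x : gmul x (gone G) = x.
Proof. by rewrite -(gmulV x) gmulA gmulgV gmul1. Qed.

Lemma ginv_unique x y : gmul x y = gone G -> x = ginv y.
Proof. by move=> xy1; rewrite -[x]gmulg1 -(gmulgV y) gmulA xy1 gmul1. Qed.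

Lemma ginvM a b : ginv (gmul a b) = gmul (ginv b) (ginv a).
Proof.
symmetry; apply: ginv_unique.
by rewrite -gmulA [gmul (ginv a) _]gmulA gmulV gmul1 gmulV.
Qed.

Lemma gmul_eq_move a b c e : gmul a b = gmul c e -> gmul (ginv a) c = gmul b (ginv e).
Proof.
move=> abce; rewrite -[gmul (ginv a) c]gmulg1 -(gmulgV e) !gmulA.
by rewrite -[gmul (gmul _ c) e]gmulA -abce gmulA gmulV gmul1.
Qed.

End GroupTheory.

Lemma word_untrack d i eps : word d i eps = untrack (tword d i eps).
Proof. by rewrite /word /untrack /tword -map_comp. Qed.

Lemma untrack_cat2 s1 s2 (a b : tletter) :
  untrack (s1 ++ a :: b :: s2) = untrack s1 ++ a.1 :: b.1 :: untrack s2.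
Proof. by rewrite /untrack map_cat. Qed.

Section Evaluation.
Variables (G : group) (x : nat -> G).

Lemma geval_cat s1 s2 : geval x (s1 ++ s2) = gmul (geval x s1) (geval x s2).
Proof. by elim: s1 => [|a s1 IH] /=; rewrite ?gmul1 // IH gmulA. Qed.

Lemma geval_congr2 s1 s2 a b a' b' :
  gmul (gletter x a) (gletter x b) = gmul (gletter x a') (gletter x b') ->
  geval x (s1 ++ a :: b :: s2) = geval x (s1 ++ a' :: b' :: s2).
Proof.
by move=> ab; rewrite !geval_cat /= [gmul (gletter x a) _]gmulA [gmul (gletter x a') _]gmulA ab.
Qed.

Lemma geval_neg_rev_pos es :
  gmul (geval x [seq (a, false) | a <- es]) (geval x [seq (a, true) | a <- rev es]) = gone G.
Proof.
elim: es => [|e es IH] /=; first by rewrite gmul1.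
rewrite rev_cons -cats1 map_cat geval_cat /= /gletter /= gmulg1.
by rewrite -gmulA [gmul (geval _ _) (gmul _ _)]gmulA IH gmul1 gmulV.
Qed.

Lemma geval_pos_neg_eq1 c es :
  geval x ([seq (a, true) | a <- c] ++ [seq (a, false) | a <- es]) = gone G ->
  geval x [seq (a, true) | a <- c] = geval x [seq (a, true) | a <- rev es].
Proof.
by rewrite geval_cat => c_es1; rewrite -[LHS]gmulg1 -(geval_neg_rev_pos es) gmulA c_es1 gmul1.
Qed.

Variable p : nat.
Hypothesis x_rel : Fp_rel p x.

Lemma geval_rstep1 w w' : rstep1 p w w' -> geval x (untrack w) = geval x (untrack w').
Proof.
case=> [s1 s2 a b oa ob ba|s1 s2 a b oa ob ab|s1 s2 a oa ob];
  rewrite !untrack_cat2; apply: geval_congr2; rewrite /gletter /=.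
- exact: gmul_eq_move (x_rel ba).
- exact: gmul_eq_move (esym (x_rel ab)).
- by rewrite gmulV gmulgV.
Qed.

Lemma geval_rstep2 (p_gt0 : 0 < p) w w' :
  rstep2 p w w' -> geval x (untrack w) = geval x (untrack w').
Proof.
case=> [s1 s2 a b oa ob ab|s1 s2 a b oa ob ba];
  rewrite !untrack_cat2; apply: geval_congr2; rewrite /gletter /=.
- have := x_rel (k := a) (n := b - p + 1) ltac:(lia).
  by have -> : b - p + 1 + p - 1 = b by lia.
- rewrite -!ginvM; congr ginv; symmetry.
  have := x_rel (k := b) (n := a - p + 1) ltac:(lia).
  by have -> : a - p + 1 + p - 1 = a by lia.
Qed.

End Evaluation.

Lemma star_ind_inv (T : Type) (R : T -> T -> Prop) (P : T -> Prop) x y :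
  (forall a b, R a b -> P a -> P b) -> star R x y -> P x -> P y.
Proof. by move=> RP; elim=> // a b c /RP; auto. Qed.

Lemma star_eqf (T U : Type) (R : T -> T -> Prop) (f : T -> U) x y :
  (forall a b, R a b -> f a = f b) -> star R x y -> f x = f y.
Proof. by move=> Rf; elim=> // a b c /Rf ->. Qed.

Lemma eval_trivial_NF_run p w v : 0 < p ->
  NF_run p w v -> eval_trivial p (untrack w) -> eval_trivial p (untrack v).
Proof.
move=> p_gt0 [u [wu [_ [uv _]]]] w1 G x x_rel; rewrite -(w1 G x x_rel).
have /= -> := star_eqf (f := fun w => geval x (untrack w)) (geval_rstep1 x_rel) wu.
by have /= -> := star_eqf (f := fun w => geval x (untrack w)) (geval_rstep2 x_rel p_gt0) uv.
Qed.

Definition int_group : group :=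
  @Pilot.Defs.Group int +%R (@GRing.opp int) 0%R (@addrA int) (@add0r int) (@addNr int).

Lemma geval_int_ones (w : seq (nat * bool)) :
  geval (fun _ => 1%R : int_group) w = ((count snd w)%:Z - (count (negb \o snd) w)%:Z)%R.
Proof. by elim: w => [|[a []] w IH] //=; rewrite IH /gletter /=; lia. Qed.

Lemma eval_trivial_balanced p d i eps :
  eval_trivial p (word d i eps) -> count (predC eps) (iota 1 d) = count eps (iota 1 d).
Proof.
move=> /(_ int_group (fun _ => 1%R) (fun _ _ _ => erefl)).
by rewrite geval_int_ones !count_map => /eqP; rewrite subr_eq0 => /eqP [->].
Qed.

Definition indices (w : seq tletter) : seq nat := [seq t.1.1 | t <- w].
Definition signs (w : seq tletter) : seq bool := [seq t.1.2 | t <- w].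
Definition pos_origins (w : seq tletter) : seq nat := [seq t.2 | t <- w & t.1.2].
Definition neg_origins (w : seq tletter) : seq nat := [seq t.2 | t <- w & ~~ t.1.2].

(** * Normal forms under [rstep1] *)

Lemma irreducible_sorted (T : Type) (R : seq T -> seq T -> Prop) (r : rel T) :
  (forall t w w', R w w' -> R (t :: w) (t :: w')) ->
  (forall x y w, ~~ r x y -> exists w', R (x :: y :: w) w') ->
  forall w, irreducible R w -> sorted r w.
Proof.
move=> R_cons R_head; elim=> [//|x [//|y w] IH] irr /=.
apply/andP; split; last by apply: IH => w' /(R_cons x) /irr.
by apply/negPn/negP => /(R_head _ _ w) [w' /irr].
Qed.

Lemma rstep1_cons p t w w' : rstep1 p w w' -> rstep1 p (t :: w) (t :: w').
Proof.
case=> [s1 s2 a b oa ob ba|s1 s2 a b oa ob ab|s1 s2 a oa ob].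
- exact: (R1gt p (t :: s1) s2 oa ob ba).
- exact: (R1lt p (t :: s1) s2 oa ob ab).
- exact: (R1eq p (t :: s1) s2 a oa ob).
Qed.

Lemma rstep1_head p (x y : tletter) w :
  ~~ (x.1.2 || ~~ y.1.2) -> exists w', rstep1 p (x :: y :: w) w'.
Proof.
case: x y => [[a [] oa]] [[b [] ob]] //= _.
case: (ltngtP a b) => [ab|ba|<-].
- by eexists; apply: (R1lt p [::] w oa ob ab).
- by eexists; apply: (R1gt p [::] w oa ob ba).
- by eexists; apply: (R1eq p [::] w a oa ob).
Qed.

Lemma irreducible_rstep1_sorted p u :
  irreducible (rstep1 p) u -> sorted (fun x y : tletter => x.1.2 || ~~ y.1.2) u.
Proof.
by apply: irreducible_sorted => [t w w'|x y w]; [apply: rstep1_cons | apply: rstep1_head].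
Qed.

Lemma sorted_signs_split (u : seq tletter) :
  sorted (fun x y : tletter => x.1.2 || ~~ y.1.2) u ->
  u = [seq t <- u | t.1.2] ++ [seq t <- u | ~~ t.1.2].
Proof.
elim: u => [//|x u IH] /= srt; case: (boolP x.1.2) => /= x_pos.
  by rewrite -IH //; apply: path_sorted srt.
have u_neg : all (fun t : tletter => ~~ t.1.2) u.
  elim: u x x_pos {IH} srt => [//|y u IH] x x_neg /= /andP [xy yu].
  have y_neg : ~~ y.1.2 by rewrite (negbTE x_neg) in xy.
  by rewrite y_neg (IH y).
have : ~~ has (fun t : tletter => t.1.2) u by rewrite -all_predC.
by rewrite has_filter negbK => /eqP ->; rewrite (all_filterP u_neg).
Qed.

Lemma origins_rstep1 p w w' :
  rstep1 p w w' -> pos_origins w = pos_origins w' /\ neg_origins w = neg_origins w'.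
Proof.
by case=> *; rewrite /pos_origins /neg_origins !filter_cat !map_cat.
Qed.

Lemma pos_origins_tword d i eps : pos_origins (tword d i eps) = [seq l <- iota 1 d | eps l].
Proof. by rewrite /pos_origins /tword filter_map -map_comp map_id. Qed.

Lemma neg_origins_tword d i eps : neg_origins (tword d i eps) = [seq l <- iota 1 d | ~~ eps l].
Proof. by rewrite /neg_origins /tword filter_map -map_comp map_id. Qed.

Lemma signs_filter_pos w :
  signs [seq t <- w | t.1.2] = nseq (count (fun t : tletter => t.1.2) w) true.
Proof. by elim: w => [|[[a []] o] w IH] //=; rewrite IH. Qed.

Lemma signs_filter_neg w :
  signs [seq t <- w | ~~ t.1.2] = nseq (count (fun t : tletter => ~~ t.1.2) w) false.
Proof. by elim: w => [|[[a []] o] w IH] //=; rewrite IH. Qed.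

Fixpoint all_at (Q : tletter -> nat -> Prop) (q : nat) (w : seq tletter) : Prop :=
  if w is t :: w' then Q t q /\ all_at Q q.+1 w' else True.

Lemma all_at_cat Q q s1 s2 :
  all_at Q q (s1 ++ s2) <-> all_at Q q s1 /\ all_at Q (q + size s1) s2.
Proof.
elim: s1 q => [|t s1 IH] q /=; first by rewrite addn0; tauto.
by rewrite IH addSnnS; tauto.
Qed.

Lemma all_at_nth Q q w t0 :
  all_at Q q w -> forall k, k < size w -> Q (nth t0 w k) (q + k).
Proof.
elim: w q => [//|t w IH] q /= [Qt Qw] [|k] k_lt /=; first by rewrite addn0.
by rewrite -addSnnS; apply: IH.
Qed.

Lemma all_at_mem Q q w : all_at Q q w -> {in w, forall t, Q t (q + index t w)}.
Proof.
move=> Qw t tw; have := all_at_nth (0, true, 0) Qw (k := index t w).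
by rewrite nth_index // index_mem; apply.
Qed.

Lemma nth_filter_iota_sub (a : pred nat) b n k :
  k < size (filter a (iota b n)) ->
  nth 0 (filter a (iota b n)) k - b - k <= count (predC a) (iota b n).
Proof.
elim: n b k => [//|n IH] b k /=; case: (boolP (a b)) => ab /=.
- by case: k => [|k] /=; [lia | move=> /(IH b.+1); lia].
- by move=> /(IH b.+1); lia.
Qed.

Lemma nth_filter_iota_ge (a : pred nat) b n k :
  k < size (filter a (iota b n)) -> b + k <= nth 0 (filter a (iota b n)) k.
Proof.
elim: n b k => [//|n IH] b k /=; case: (boolP (a b)) => ab /=.
- by case: k => [|k] /=; [lia | move=> /(IH b.+1); lia].
- by move=> /(IH b.+1); lia.
Qed.

Section FirstPhase.
Variables (p : nat) (i : nat -> nat).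

(* [t.2 - 1] is the original and [q] the current position of [t], both
   0-based; each letter crossed on the way raises the index by at most [p - 1]. *)
Definition rstep1_inv (t : tletter) (q : nat) : Prop :=
  i t.2 <= t.1.1 /\
  if t.1.2 then t.1.1 + (p - 1) * q <= i t.2 + (p - 1) * (t.2 - 1)
  else t.1.1 + (p - 1) * (t.2 - 1) <= i t.2 + (p - 1) * q.

Lemma all_at_tword d eps q :
  all_at rstep1_inv q [seq (i l, eps l, l) | l <- iota q.+1 d].
Proof.
elim: d q => [//|d IH] q /=; split; last exact: IH.
by rewrite /rstep1_inv /= subSS subn0; case: (eps _).
Qed.

Lemma all_at_rstep1 (p_gt0 : 0 < p) w w' :
  rstep1 p w w' -> all_at rstep1_inv 0 w -> all_at rstep1_inv 0 w'.
Proof.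
case=> [s1 s2 a b oa ob _|s1 s2 a b oa ob _|s1 s2 a oa ob]; rewrite !all_at_cat /= /rstep1_inv /=;
  move=> -[inv1 [[inva1 inva2] [[invb1 invb2] inv2]]];
  (split; [exact: inv1 | split; [split | split; [split | exact: inv2]]]);
  rewrite ?mulnS in inva2 invb2 *; nia.
Qed.

Lemma pos_half_bound (P : seq tletter) (a : pred nat) d :
  all_at rstep1_inv 0 P -> all (fun t : tletter => t.1.2) P ->
  [seq t.2 | t <- P] = filter a (iota 1 d) ->
  {in P, forall t, i t.2 <= t.1.1 <= i t.2 + (p - 1) * count (predC a) (iota 1 d)}.
Proof.
move=> invP posP oP [[n s] o] tP; have /= s_pos := allP posP _ tP.
rewrite s_pos in tP *; have /= [-> /=] := all_at_mem invP tP; rewrite add0n.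
set k := index _ P; have k_lt : k < size P by rewrite /k index_mem.
have o_def : o = nth 0 (filter a (iota 1 d)) k.
  by rewrite -oP (nth_map (0, true, 0)) ?nth_index.
have := @nth_filter_iota_sub a 1 d k; rewrite -o_def -oP size_map => /(_ k_lt) o_le.
have : (p - 1) * (o - 1) <= (p - 1) * k + (p - 1) * count (predC a) (iota 1 d).
  by rewrite -mulnDr leq_mul2l; apply/orP; right; lia.
lia.
Qed.

Lemma neg_half_bound (N : seq tletter) (a : pred nat) d q :
  all_at rstep1_inv q N -> all (fun t : tletter => ~~ t.1.2) N ->
  [seq t.2 | t <- N] = filter a (iota 1 d) ->
  {in N, forall t, i t.2 <= t.1.1 <= i t.2 + (p - 1) * q}.
Proof.
move=> invN negN oN [[n s] o] tN; have /= /negbTE s_neg := allP negN _ tN.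
rewrite s_neg in tN *; have /= [-> /=] := all_at_mem invN tN.
set k := index _ N; have k_lt : k < size N by rewrite /k index_mem.
have o_def : o = nth 0 (filter a (iota 1 d)) k.
  by rewrite -oN (nth_map (0, true, 0)) ?nth_index.
have := @nth_filter_iota_ge a 1 d k; rewrite -o_def -oN size_map => /(_ k_lt) o_ge.
have : (p - 1) * (q + k) <= (p - 1) * (o - 1) + (p - 1) * q.
  by rewrite -mulnDr leq_mul2l; apply/orP; right; lia.
lia.
Qed.

End FirstPhase.

Lemma rstep1_normal_form p d i eps u K : 0 < p ->
  count eps (iota 1 d) = K -> count (predC eps) (iota 1 d) = K ->
  star (rstep1 p) (tword d i eps) u -> irreducible (rstep1 p) u ->
  signs u = nseq K true ++ nseq K false /\
  {in u, forall t, i t.2 <= t.1.1 <= i t.2 + (p - 1) * K}.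
Proof.
move=> p_gt0 Kpos Kneg wu irr.
have inv := star_ind_inv (all_at_rstep1 (i := i) p_gt0) wu (all_at_tword p i d eps 0).
have [po no] : pos_origins u = [seq l <- iota 1 d | eps l] /\
               neg_origins u = [seq l <- iota 1 d | ~~ eps l].
  rewrite -(pos_origins_tword d i eps) -(neg_origins_tword d i eps).
  by split; apply/esym/(star_eqf _ wu) => w w' /origins_rstep1 [].
have u_split := sorted_signs_split (irreducible_rstep1_sorted irr).
have posP : all (fun t : tletter => t.1.2) [seq t <- u | t.1.2] by apply: filter_all.
have negN : all (fun t : tletter => ~~ t.1.2) [seq t <- u | ~~ t.1.2] by apply: filter_all.
have countP : count (fun t : tletter => t.1.2) u = K.
  by rewrite -Kpos -!size_filter -po /pos_origins size_map.
have countN : count (fun t : tletter => ~~ t.1.2) u = K.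
  by rewrite -Kneg -!size_filter -no /neg_origins size_map.
have [invP invN] : all_at (rstep1_inv p i) 0 [seq t <- u | t.1.2] /\
                   all_at (rstep1_inv p i) K [seq t <- u | ~~ t.1.2].
  by move: inv; rewrite {1}u_split all_at_cat size_filter countP.
split.
- rewrite {1}u_split /signs map_cat -!/(signs _).
  by rewrite signs_filter_pos signs_filter_neg -{1}countP -countN.
- move=> t; rewrite u_split mem_cat => /orP [tP|tN].
  + by rewrite -Kneg; apply: (pos_half_bound invP posP po).
  + exact: (neg_half_bound invN negN no).
Qed.

(** * Index drift under [rstep2] *)

Lemma rstep2_cons p t w w' : rstep2 p w w' -> rstep2 p (t :: w) (t :: w').
Proof.
case=> [s1 s2 a b oa ob ab|s1 s2 a b oa ob ba].
- exact: (R2pos (t :: s1) s2 oa ob ab).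
- exact: (R2neg (t :: s1) s2 oa ob ba).
Qed.

Definition nf_rel (p : nat) : rel nat := fun a b => b <= a + p - 1.

Definition rstep2_free (p : nat) (x y : tletter) : bool :=
  (x.1.2 && y.1.2 ==> nf_rel p x.1.1 y.1.1) && (~~ x.1.2 && ~~ y.1.2 ==> nf_rel p y.1.1 x.1.1).

Lemma rstep2_head p (x y : tletter) w :
  ~~ rstep2_free p x y -> exists w', rstep2 p (x :: y :: w) w'.
Proof.
case: x y => [[a [] oa]] [[b [] ob]]; rewrite /rstep2_free /nf_rel //= ?andbT -ltnNge => lt.
- by eexists; apply: (R2pos [::] w oa ob lt).
- by eexists; apply: (R2neg [::] w oa ob lt).
Qed.

Lemma irreducible_rstep2_sorted p v : irreducible (rstep2 p) v -> sorted (rstep2_free p) v.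
Proof.
by apply: irreducible_sorted => [t w w'|x y w]; [apply: rstep2_cons | apply: rstep2_head].
Qed.

Lemma signs_rstep2 p w w' : rstep2 p w w' -> signs w = signs w'.
Proof. by case=> *; rewrite /signs !map_cat. Qed.

Section Ceilings.
Variable p : nat.

Definition pass (c q : nat) : nat := if q <= c then q else q + (p - 1).

(* The ceiling of a positive letter is the index it would reach by being
   passed through the later positive letters, that of a negative letter by
   being passed through the earlier negative ones.  An [rstep2] step keeps
   every ceiling and lowers one index. *)
Definition ceil_pos (suf : seq tletter) (n : nat) : nat :=
  foldl (fun q y => if y.1.2 then pass y.1.1 q else q) n suf.

Definition ceil_neg (pre : seq tletter) (n : nat) : nat :=
  foldr (fun y q => if y.1.2 then q else pass y.1.1 q) n pre.

Fixpoint ceilings (pre w : seq tletter) : seq (nat * nat * nat) :=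
  if w is t :: w' then
    (t.2, if t.1.2 then ceil_pos w' t.1.1 else ceil_neg pre t.1.1, t.1.1)
      :: ceilings (rcons pre t) w'
  else [::].

Definition lowers (old new : seq (nat * nat * nat)) : Prop :=
  forall e', e' \in new -> exists2 e, e \in old & e'.1 = e.1 /\ e'.2 <= e.2.

Lemma lowers_refl l : lowers l l.
Proof. by move=> e el; exists e. Qed.

Lemma lowers_trans l1 l2 l3 : lowers l1 l2 -> lowers l2 l3 -> lowers l1 l3.
Proof.
move=> l12 l23 e3 /l23 [e2 /l12 [e1 e1l [-> le21]] [-> le32]].
by exists e1 => //; split => //; apply: leq_trans le32 le21.
Qed.

Lemma lowers_cons e l l' : lowers l l' -> lowers (e :: l) (e :: l').
Proof.
move=> ll' e'; rewrite inE => /orP [/eqP ->|/ll' [e2 e2l e2e']].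
  by exists e; rewrite ?mem_head.
by exists e2; rewrite // inE e2l orbT.
Qed.

Lemma pass_comm c e n : e + p <= c -> 0 < p -> pass c (pass e n) = pass e (pass (c - p + 1) n).
Proof.
move=> ec p_gt0; rewrite /pass.
by case: (leqP n e) => ?; case: (leqP n (c - p + 1)) => ? /=; repeat case: ifP => /= ?; lia.
Qed.

Lemma ceil_neg_rcons pre t n :
  ceil_neg (rcons pre t) n = ceil_neg pre (if t.1.2 then n else pass t.1.1 n).
Proof. by rewrite /ceil_neg foldr_rcons. Qed.

Lemma ceilings_ext pre1 pre2 w :
  ceil_neg pre1 =1 ceil_neg pre2 -> ceilings pre1 w = ceilings pre2 w.
Proof.
elim: w pre1 pre2 => [//|t w IH] pre1 pre2 pre12 /=; rewrite pre12; congr cons.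
by apply: IH => n; rewrite !ceil_neg_rcons.
Qed.

Lemma lowers_ceilings_cat r r' :
  ceil_pos r =1 ceil_pos r' -> (forall pre, lowers (ceilings pre r) (ceilings pre r')) ->
  forall s pre, lowers (ceilings pre (s ++ r)) (ceilings pre (s ++ r')).
Proof.
move=> rr' low; elim=> [//|t s IH] pre /=.
rewrite /ceil_pos !foldl_cat -!/(ceil_pos _ _) rr'; exact: lowers_cons.
Qed.

Lemma lowers_rstep2 w w' : 0 < p -> rstep2 p w w' -> lowers (ceilings [::] w) (ceilings [::] w').
Proof.
move=> p_gt0; case=> [s1 s2 a b oa ob ab|s1 s2 a b oa ob ba]; apply: lowers_ceilings_cat.
- by move=> n /=; rewrite pass_comm //; lia.
- move=> pre /=.
  have -> : ceil_pos s2 (pass b a) = ceil_pos s2 a by rewrite /pass ifT //; lia.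
  have -> : ceil_pos s2 (pass a (b - p + 1)) = ceil_pos s2 b.
    by rewrite /pass ifF; [congr ceil_pos; lia | lia].
  rewrite (@ceilings_ext (rcons (rcons pre (b - p + 1, true, ob)) (a, true, oa))
                         (rcons (rcons pre (a, true, oa)) (b, true, ob))); last first.
    by move=> n; rewrite !ceil_neg_rcons.
  move=> e'; rewrite !inE => /or3P [/eqP ->|/eqP ->|e'r].
  + by exists (ob, ceil_pos s2 b, b); rewrite ?inE ?eqxx ?orbT //=; split => //; lia.
  + by exists (oa, ceil_pos s2 a, a); rewrite ?inE ?eqxx ?orbT.
  + by exists e'; rewrite ?inE ?e'r ?orbT.
- by [].
- move=> pre /=; rewrite !ceil_neg_rcons /=.
  have -> : pass a b = b by rewrite /pass ifT //; lia.
  have -> : ceil_neg pre (pass b (a - p + 1)) = ceil_neg pre a.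
    by rewrite /pass ifF; [congr ceil_neg; lia | lia].
  rewrite (@ceilings_ext (rcons (rcons pre (b, false, ob)) (a - p + 1, false, oa))
                         (rcons (rcons pre (a, false, oa)) (b, false, ob))); last first.
    by move=> n; rewrite !ceil_neg_rcons /=; congr ceil_neg; symmetry; apply: pass_comm; lia.
  move=> e'; rewrite !inE => /or3P [/eqP ->|/eqP ->|e'r].
  + by exists (ob, ceil_neg pre b, b); rewrite ?inE ?eqxx ?orbT.
  + by exists (oa, ceil_neg pre a, a); rewrite ?inE ?eqxx ?orbT //=; split => //; lia.
  + by exists e'; rewrite ?inE ?e'r ?orbT.
Qed.

Lemma pass_ge c q : q <= pass c q.
Proof. by rewrite /pass; case: ifP => _; lia. Qed.

Lemma pass_le c q : pass c q <= q + (p - 1).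
Proof. by rewrite /pass; case: ifP => _; lia. Qed.

Lemma ceil_pos_ge suf n : n <= ceil_pos suf n.
Proof.
elim: suf n => [//|y suf IH] n /=.
by apply: leq_trans (IH _); case: ifP => _ //; apply: pass_ge.
Qed.

Lemma ceil_neg_ge pre n : n <= ceil_neg pre n.
Proof. by elim: pre => [//|y pre IH] /=; case: ifP => _ //; apply: leq_trans IH (pass_ge _ _). Qed.

Lemma ceil_pos_le suf n :
  ceil_pos suf n <= n + (p - 1) * count (fun y : tletter => y.1.2 == true) suf.
Proof.
elim: suf n => [|y suf IH] n /=; first lia.
case: ifP => _ /=; last by rewrite add0n.
by apply: leq_trans (IH _) _; have := pass_le y.1.1 n; nia.
Qed.

Lemma ceil_neg_le pre n :
  ceil_neg pre n <= n + (p - 1) * count (fun y : tletter => y.1.2 == false) pre.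
Proof.
elim: pre => [|y pre IH] /=; first lia.
case: ifP => _ /=; first by rewrite add0n.
by have := pass_le y.1.1 (ceil_neg pre n); nia.
Qed.

Lemma ceilings_ge pre w : forall e, e \in ceilings pre w ->
  exists2 t, t \in w & t.2 = e.1.1 /\ e.2 = t.1.1 /\ t.1.1 <= e.1.2.
Proof.
elim: w pre => [//|t w IH] pre e /=; rewrite inE => /orP [/eqP ->|/IH [t' t'w t'e]].
- exists t; rewrite ?mem_head //=; do 2!split=> //.
  by case: ifP => _; [apply: ceil_pos_ge | apply: ceil_neg_ge].
- by exists t'; rewrite // inE t'w orbT.
Qed.

Lemma ceilings_le pre w : forall t, t \in w ->
  exists2 e, e \in ceilings pre w & e.1.1 = t.2 /\ e.2 = t.1.1 /\
    e.1.2 <= t.1.1 + (p - 1) * count (fun y : tletter => y.1.2 == t.1.2) (pre ++ w).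
Proof.
elim: w pre => [//|t w IH] pre t0 /=; rewrite inE => /orP [/eqP ->|/(IH (rcons pre t)) [e ew e_t0]].
- exists (t.2, if t.1.2 then ceil_pos w t.1.1 else ceil_neg pre t.1.1, t.1.1).
    by rewrite mem_head.
  rewrite /=; do 2!split=> //; rewrite count_cat /= eqxx.
  case: ifP => _.
  + by apply: leq_trans (ceil_pos_le _ _) _; nia.
  + by apply: leq_trans (ceil_neg_le _ _) _; nia.
- by exists e; rewrite ?inE ?ew ?orbT // -cat_rcons.
Qed.

End Ceilings.

Lemma rstep2_index_drift p u v : 0 < p -> star (rstep2 p) u v ->
  {in v, forall t, exists2 t0, t0 \in u &
     t0.2 = t.2 /\
     t.1.1 <= t0.1.1 <= t.1.1 + (p - 1) * count (fun y : tletter => y.1.2 == t.1.2) v}.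
Proof.
move=> p_gt0 uv t tv.
have low : lowers (ceilings p [::] u) (ceilings p [::] v).
  apply: (star_ind_inv (P := fun w => lowers (ceilings p [::] u) (ceilings p [::] w)) _ uv).
    by move=> w w' /(lowers_rstep2 p_gt0) ww' uw; apply: lowers_trans uw ww'.
  exact: lowers_refl.
have [e ev [e_o [e_n e_le]]] := ceilings_le p [::] tv.
have [e0 e0u [e_e0 le_e0]] := low e ev.
have [t0 t0u [t0_o [e0_n t0_le]]] := @ceilings_ge p [::] u e0 e0u.
exists t0 => //; split; first by rewrite t0_o -e_o e_e0.
rewrite cat0s -e_n -e0_n e_e0 in e_le t0_le *.
by rewrite le_e0 (leq_trans t0_le e_le).
Qed.

(** * An action of F_p separating positive normal forms *)

Section Bijections.
Variable T : Type.

Definition bij := {fg : (T -> T) * (T -> T) | cancel fg.1 fg.2 /\ cancel fg.2 fg.1}.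

Lemma bij_eq (a b : bij) : (sval a).1 =1 (sval b).1 -> (sval a).2 =1 (sval b).2 -> a = b.
Proof.
case: a b => [[f1 g1] fg1] [[f2 g2] fg2] /=.
move=> /functional_extensionality f12 /functional_extensionality g12.
by subst; congr exist; apply: proof_irrelevance.
Qed.

Definition bij_mul (a b : bij) : bij :=
  exist _ ((sval a).1 \o (sval b).1, (sval b).2 \o (sval a).2)
    (conj (can_comp (proj1 (svalP a)) (proj1 (svalP b)))
          (can_comp (proj2 (svalP b)) (proj2 (svalP a)))).

Definition bij_inv (a : bij) : bij :=
  exist _ ((sval a).2, (sval a).1) (conj (proj2 (svalP a)) (proj1 (svalP a))).

Definition bij_one : bij := exist _ (id, id) (conj (@frefl T T id) (@frefl T T id)).

Lemma bij_mulA : associative bij_mul.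
Proof. by move=> a b c; apply: bij_eq. Qed.

Lemma bij_mul1 : left_id bij_one bij_mul.
Proof. by move=> a; apply: bij_eq. Qed.

Lemma bij_mulV a : bij_mul (bij_inv a) a = bij_one.
Proof. by apply: bij_eq => z /=; apply: (proj1 (svalP a)). Qed.

Definition bij_group : group := @Pilot.Defs.Group bij bij_mul bij_inv bij_one
  bij_mulA bij_mul1 bij_mulV.

End Bijections.

Definition state := (nat * seq nat)%type.

Section Action.
Variable p : nat.
Hypothesis p_gt1 : 1 < p.

Definition push (t : nat) (s : seq nat) : seq nat :=
  if t < p - 1 then t :: s else if s is h :: s' then h + (p - 1) :: s' else [::].

Definition act (n : nat) (z : state) : state :=
  let: (m, s) := z in
  if m < n then (m, s) else if m < n + p then (n, push (m - n) s) else (m - (p - 1), s).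

Definition unact (n : nat) (z : state) : state :=
  let: (m, s) := z in
  if m < n then (m, s)
  else if m == n then
    if s is h :: s' then
      if h < p - 1 then (n + h, s') else (n + (p - 1), (h - (p - 1)) :: s')
    else (n + (p - 1), [::])
  else (m + (p - 1), s).

Local Ltac case_ifs_lia :=
  repeat (case: ifP => [?|/negbT ?] /=);
  try (by exfalso; lia); try (by congr pair; lia); try (by congr (_, _ :: _); lia).

Lemma actK n : cancel (act n) (unact n).
Proof. by move=> [m [|h s]]; rewrite /act /unact /push; case_ifs_lia. Qed.

Lemma unactK n : cancel (unact n) (act n).
Proof. by move=> [m [|h s]]; rewrite /act /unact /push; case_ifs_lia. Qed.

Lemma act_rel k n : k < n -> act n \o act k =1 act k \o act (n + p - 1).
Proof. by move=> kn [m [|h s]]; rewrite /= /act /push; case_ifs_lia. Qed.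

Definition act_gen (n : nat) : bij_group state :=
  exist _ (act n, unact n) (conj (actK n) (unactK n)).

Lemma Fp_rel_act_gen : Fp_rel p act_gen.
Proof.
move=> k n kn; apply: bij_eq => z /=; first exact: act_rel.
apply: (can_inj (actK k)); apply: (can_inj (actK n)).
by rewrite [in LHS]unactK [in LHS]unactK -[RHS]/((act n \o act k) _) act_rel //= !unactK.
Qed.

Definition unact_word (c : seq nat) : state -> state := foldr (fun a h => h \o unact a) id c.

Lemma unact_word_cons a c z : unact_word (a :: c) z = unact_word c (unact a z).
Proof. by []. Qed.

Lemma geval_act_gen_pos c :
  (sval (geval act_gen [seq (a, true) | a <- c])).2 =1 unact_word c.
Proof. by elim: c => [//|a c IH] z /=; rewrite -IH. Qed.

Lemma unact_word_empty c z : z.2 = [::] -> (unact_word c z).2 = [::].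
Proof.
elim: c z => [//|a c IH] [m s] /= ->; apply: IH.
by rewrite /unact; case: ifP => //; case: ifP.
Qed.

(* Started at [(a, [:: 0])], with [a] the first letter, the inverse of a
   sorted positive word empties the stack; started above the first letter it
   never does.  This is how the action separates positive normal forms. *)
Lemma unact_word_head a c : (unact_word (a :: c) (a, [:: 0])).2 = [::].
Proof.
rewrite unact_word_cons; apply: unact_word_empty.
by rewrite /unact /= ltnn eqxx (_ : (0 < p - 1) = true) //; lia.
Qed.

Lemma unact_word_above c r : sorted (nf_rel p) c ->
  (if c is a :: _ then a < r else true) -> (unact_word c (r, [:: 0])).2 != [::].
Proof.
elim: c r => [//|a c IH] r c_sorted ar; rewrite unact_word_cons.
have -> : unact a (r, [:: 0]) = (r + (p - 1), [:: 0]).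
  by rewrite /unact /= ltnNge ltnW //= gtn_eqF.
apply: IH; first exact: path_sorted c_sorted.
by case: c c_sorted => //= b c /andP [ab _]; rewrite /nf_rel in ab; lia.
Qed.

Lemma unact_word_inj c1 c2 : sorted (nf_rel p) c1 -> sorted (nf_rel p) c2 ->
  unact_word c1 =1 unact_word c2 -> c1 = c2.
Proof.
elim: c1 c2 => [|a c1 IH] [|b c2] // c1_sorted c2_sorted c12.
- by have := c12 (b, [:: 0]); move/(congr1 snd); rewrite unact_word_head.
- by have := c12 (a, [:: 0]); move/(congr1 snd); rewrite unact_word_head.
have ab : a = b.
  case: (ltngtP a b) => // [ab|ba].
  - by have := unact_word_above c1_sorted ab; rewrite c12 unact_word_head.
  - by have := unact_word_above c2_sorted ba; rewrite -c12 unact_word_head.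
subst b; congr cons; apply: IH; [exact: path_sorted c1_sorted | exact: path_sorted c2_sorted |].
by move=> z; have := c12 (act a z); rewrite !unact_word_cons actK.
Qed.

End Action.

Lemma eval_trivial_palindrome p c es : 1 < p ->
  sorted (nf_rel p) c -> sorted (nf_rel p) (rev es) ->
  eval_trivial p ([seq (a, true) | a <- c] ++ [seq (a, false) | a <- es]) -> c = rev es.
Proof.
move=> p_gt1 c_sorted es_sorted /(_ _ _ (Fp_rel_act_gen p_gt1)) /geval_pos_neg_eq1 c_es.
apply: (unact_word_inj p_gt1 c_sorted es_sorted) => z.
by rewrite -!geval_act_gen_pos c_es.
Qed.

(** * Trivial normal forms are palindromes *)

Lemma all_signs_nseq b n w : signs w = nseq n b -> all (fun t : tletter => t.1.2 == b) w.
Proof.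
move=> w_signs; have : all (pred1 b) (nseq n b) by apply/all_pred1P; rewrite size_nseq.
by rewrite -w_signs /signs all_map.
Qed.

Lemma untrack_const_sign b w :
  all (fun t : tletter => t.1.2 == b) w -> untrack w = [seq (a, b) | a <- indices w].
Proof. by elim: w => [|[[a s] o] w IH] //= /andP [/eqP -> /IH ->]. Qed.

Lemma irreducible_rstep2_palindrome p K v : 1 < p ->
  signs v = nseq K true ++ nseq K false -> irreducible (rstep2 p) v ->
  eval_trivial p (untrack v) ->
  exists2 c, size c = K & sorted (nf_rel p) c /\
    untrack v = [seq (a, true) | a <- c] ++ [seq (a, false) | a <- rev c].
Proof.
move=> p_gt1 v_signs irr v1.
have v_size : size v = K + K.
  by rewrite -(size_map (fun t : tletter => t.1.2)) -/(signs v) v_signs size_cat !size_nseq.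
have pos_take : all (fun t : tletter => t.1.2 == true) (take K v).
  apply: (@all_signs_nseq _ K).
  by rewrite /signs map_take -/(signs v) v_signs take_size_cat ?size_nseq.
have neg_drop : all (fun t : tletter => t.1.2 == false) (drop K v).
  apply: (@all_signs_nseq _ K).
  by rewrite /signs map_drop -/(signs v) v_signs drop_size_cat ?size_nseq.
have v_untrack : untrack v = [seq (a, true) | a <- indices (take K v)] ++
                             [seq (a, false) | a <- indices (drop K v)].
  by rewrite -{1}(cat_take_drop K v) /untrack map_cat -!/(untrack _)
             (untrack_const_sign pos_take) (untrack_const_sign neg_drop).
have v_sorted := irreducible_rstep2_sorted irr.
have pos_sorted : sorted (nf_rel p) (indices (take K v)).
  rewrite sorted_map; apply: (sub_in_sorted _ pos_take (take_sorted K v_sorted)).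
  by move=> x y /eqP x_pos /eqP y_pos; rewrite /rstep2_free x_pos y_pos /= andbT.
have neg_sorted : sorted (nf_rel p) (rev (indices (drop K v))).
  rewrite rev_sorted sorted_map; apply: (sub_in_sorted _ neg_drop (drop_sorted K v_sorted)).
  by move=> x y /eqP x_neg /eqP y_neg; rewrite /rstep2_free x_neg y_neg.
have := eval_trivial_palindrome p_gt1 pos_sorted neg_sorted.
rewrite -v_untrack => /(_ v1) take_drop.
exists (indices (take K v)); first by rewrite size_map size_takel // v_size leq_addr.
by rewrite v_untrack take_drop revK.
Qed.

Lemma map_iota1 (T : Type) (f : nat -> T) (c : seq nat) :
  [seq f (nth 0 c l.-1) | l <- iota 1 (size c)] = map f c.
Proof.
rewrite (iotaDl 1 0) -map_comp (eq_map (g := fun l => f (nth 0 c l))) //.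
by rewrite (map_comp f (nth 0 c)) -/(mkseq _ _) mkseq_nth.
Qed.

Lemma natz_dist_le (a b X : nat) : a <= b + X -> b <= a + X -> (`|a%:Z - b%:Z| <= X%:Z)%R.
Proof. by move=> ab ba; rewrite ler_norml; lia. Qed.

Lemma palindrome_bounds p K (i : nat -> nat) (v : seq tletter) (c : seq nat) :
  size c = K -> sorted (nf_rel p) c ->
  untrack v = [seq (a, true) | a <- c] ++ [seq (a, false) | a <- rev c] ->
  {in v, forall t, i t.2 <= t.1.1 + (p - 1) * K /\ t.1.1 <= i t.2 + (p - 1) * K} ->
  (exists j : nat -> nat,
     untrack v = [seq (j l, true) | l <- iota 1 K] ++
                 [seq (j l, false) | l <- rev (iota 1 K)] /\
     (forall l, 1 <= l <= K.-1 -> j l.+1 <= j l + p - 1) /\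
     (forall l, 1 <= l <= K ->
        (- (K * (p - 1))%:Z <= (j l)%:Z - (i (tauinv v l))%:Z <= (K * (p - 1))%:Z)%R)) /\
  (forall k, 1 <= k <= K ->
     (`|(i (tauinv v k))%:Z - (i (tauinv v (K + K - k + 1)))%:Z| <= ((K + K) * (p - 1))%:Z)%R).
Proof.
move=> c_size c_sorted v_untrack v_bound.
have v_indices : indices v = c ++ rev c.
  rewrite /indices (map_comp fst fst) -/(untrack v) v_untrack.
  by rewrite map_cat -!map_comp !map_id_in.
have v_size : size v = K + K.
  by rewrite -(size_map (fun t : tletter => t.1.1)) -/(indices v) v_indices size_cat size_rev c_size.
have nth_index q : q < K + K -> (nth (0, true, 0) v q).1.1 = nth 0 (c ++ rev c) q.
  by move=> q_lt; rewrite -v_indices (nth_map (0, true, 0)) //; rewrite v_size.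
have letter_bound q : q < K + K ->
    (`|(i (nth (0, true, 0)%N v q).2)%:Z - (nth 0%N (c ++ rev c) q)%:Z| <= (K * (p - 1))%:Z)%R.
  move=> q_lt; rewrite -nth_index //.
  have q_v : q < size v by rewrite v_size.
  have [lo hi] := v_bound _ (mem_nth (0, true, 0) q_v).
  by apply: natz_dist_le; rewrite mulnC.
split.
- exists (fun l => nth 0 c l.-1); split; [|split].
  + rewrite v_untrack -c_size (map_rev (fun l => (nth 0 c l.-1, false))).
    by rewrite (map_iota1 (fun a => (a, true))) (map_iota1 (fun a => (a, false))) map_rev.
  + move=> l /andP [l_ge1 l_lt]; move/(sortedP 0): c_sorted => /(_ l.-1).
    by rewrite /nf_rel prednK //; apply; lia.
  + move=> l /andP [l_ge1 l_le]; have := letter_bound l.-1 ltac:(lia).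
    by rewrite nth_cat c_size ifT 1?distrC -1?ler_norml //; lia.
- move=> k /andP [k_ge1 k_le]; rewrite /tauinv (_ : (K + K - k + 1).-1 = K + (K - k)); last by lia.
  have head_bound := letter_bound k.-1 ltac:(lia).
  have tail_bound := letter_bound (K + (K - k)) ltac:(lia).
  rewrite nth_cat c_size ifT in head_bound; last by lia.
  rewrite nth_cat c_size ifF ?addKn ?nth_rev ?c_size in tail_bound; try lia.
  rewrite (_ : K - (K - k).+1 = k.-1) in tail_bound; last by lia.
  rewrite mulnDl PoszD; apply: le_trans (ler_distD (Posz (nth 0 c k.-1)) _ _) _.
  by rewrite lerD // distrC.
Qed.

Lemma NF_run_index_bound p d i eps v K : 1 < p ->
  count eps (iota 1 d) = K -> count (predC eps) (iota 1 d) = K ->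
  NF_run p (tword d i eps) v ->
  signs v = nseq K true ++ nseq K false /\
  {in v, forall t, i t.2 <= t.1.1 + (p - 1) * K /\ t.1.1 <= i t.2 + (p - 1) * K}.
Proof.
move=> p_gt1 Kpos Kneg [u [wu [irr1 [uv _]]]]; have p_gt0 := ltnW p_gt1.
have [u_signs u_bound] := rstep1_normal_form p_gt0 Kpos Kneg wu irr1.
have v_signs : signs v = nseq K true ++ nseq K false.
  by rewrite -u_signs; apply/esym/(star_eqf _ uv) => w w' /signs_rstep2.
split => // -[[n s] o] tv.
have [[[n0 s0] o0] t0u [/= <- /andP [lo hi]]] := rstep2_index_drift p_gt0 uv tv.
have /andP [lo0 hi0] := u_bound _ t0u.
have count_s : count (fun y : tletter => y.1.2 == s) v = K.
  rewrite -(count_map (fun y : tletter => y.1.2) (pred1 s)) -/(signs v) v_signs.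
  by rewrite count_cat !count_nseq; case: (s) => /=; lia.
rewrite count_s in hi; rewrite /= in lo0 hi0 *; lia.
Qed.

Unset Implicit Arguments.
Local Open Scope ring_scope.

Theorem mainTheorem5 (p d : nat) (i : nat -> nat) (eps : nat -> bool) :
  (2 <= p)%N ->
  eval_trivial p (word d i eps) ->
  ~~ odd d /\
  forall v : seq tletter, NF_run p (tword d i eps) v ->
    (exists j : nat -> nat,
       untrack v = [seq (j l, true) | l <- iota 1 (d %/ 2)] ++
                   [seq (j l, false) | l <- rev (iota 1 (d %/ 2))] /\
       (forall l, (1 <= l <= (d %/ 2).-1)%N -> (j l.+1 <= j l + p - 1)%N) /\
       (forall l, (1 <= l <= d %/ 2)%N ->
          - ((d * (p - 1)) %/ 2)%N%:Z <= (j l)%:Z - (i (tauinv v l))%:Z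
          <= ((d * (p - 1)) %/ 2)%N%:Z)) /\
    (forall k, (1 <= k <= d %/ 2)%N ->
       `|(i (tauinv v k))%:Z - (i (tauinv v (d - k + 1)))%:Z| <= (d * (p - 1))%:Z).
Proof.
move=> p_gt1 w1; set K := count eps (iota 1 d).
have Kneg := eval_trivial_balanced w1.
have d_eq : d = (K + K)%N by rewrite -{1}(size_iota 1 d) -(count_predC eps) Kneg.
split; first by rewrite d_eq addnn odd_double.
move=> v run; have [_ [_ [_ [_ irr2]]]] := run.
have [v_signs v_bound] := NF_run_index_bound p_gt1 erefl Kneg run.
have v1 : eval_trivial p (untrack v).
  by apply: (eval_trivial_NF_run (ltnW p_gt1) run); rewrite -word_untrack.
have [c c_size [c_sorted v_untrack]] := irreducible_rstep2_palindrome p_gt1 v_signs irr2 v1.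
have -> : (d %/ 2 = K)%N by rewrite d_eq addnn -mul2n mulKn.
have -> : ((d * (p - 1)) %/ 2 = K * (p - 1))%N by rewrite d_eq addnn -mul2n -mulnA mulKn.
by rewrite d_eq; apply: palindrome_bounds c_size c_sorted v_untrack v_bound.
Qed.
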